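(* Let $G\in\mathcal{RG}^{{\underline{\kappa}},*}_{g,n}$ be non-bipartite and $\underline b\in\mathbb R^n$. A point $w\in\operatorname{vp}_G^{-1}(\underline b)$ is a vertex of $P_G(\underline b)$ if and only if $w(e)\ge0$ for all $e\in E(G)\setminus S(G)$ and the edge set $F=\{e\in E(G)\setminus S(G):w(e)>0\}$ forms a disjoint union of trees and/or one-odd-cycle graphs. Moreover, the cone of feasible directions of $P_G(\underline b)$ at such a vertex is $\{v\in\operatorname{vp}_G^{-1}(0):v(e)\ge0\ \forall e\in E(G)\setminus(S(G)\cup F)\}$; in particular it depends only on $F$ and not on $\underline b$.
   Context: $\mathcal{RG}^{{\underline{\kappa}},*}_{g,n}$: connected ribbon graphs of genus $g$ with $n$ labeled vertices and faces of odd degrees ${\underline{\kappa}}$. $\operatorname{vp}_G:\mathbb R^{E(G)}\to\mathbb R^n$, $\operatorname{vp}_G(w)_v=\sum_e a_{ve}w(e)$ ($a_{ve}=2$ for a loop at $v$, $1$ for other incident edges, $0$ otherwise). Static edges $S(G)$: edges $e$ such that some component of $G-e$ is bipartite. $P_G(\underline b)=\{w\in\operatorname{vp}_G^{-1}(\underline b):w(e)\ge0\ \forall e\in E(G)\setminus S(G)\}$. A one-odd-cycle graph is a connected graph with exactly one simple cycle, of odd length. The cone of feasible directions of a polyhedron $P$ at $p$ is $\{v: p+\varepsilon v\in P\text{ for some }\varepsilon>0\}$. *)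

From HB Require Import structures.
From mathcomp Require Import all_boot all_order all_fingroup all_algebra.
From mathcomp Require Import reals.
Set Implicit Arguments. Unset Strict Implicit. Unset Printing Implicit Defensive.
Import Order.TTheory GRing.Theory Num.Theory.
Local Open Scope ring_scope.

(* A ribbon graph is encoded by darts (half-edges) E * bool; the edge
   involution sigma1 flips the boolean, sigma0 : {perm E * bool} is the
   cyclic order at vertices, and lab : E * bool -> 'I_n labels the vertex
   (sigma0-cycle) of each dart.  Faces are the cycles of sigma0 \o sigma1. *)

Definition sigma1 (E : finType) (d : E * bool) : E * bool := (d.1, ~~ d.2).

Definition sigma2 (E : finType) (s0 : {perm E * bool}) (d : E * bool) : E * bool :=
  s0 (sigma1 d).

Section Graph.
Variables (E : finType) (n : nat) (lab : E * bool -> 'I_n).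

Definition joins (e : E) (u v : 'I_n) : bool :=
  ((lab (e, false) == u) && (lab (e, true) == v)) ||
  ((lab (e, false) == v) && (lab (e, true) == u)).

Definition adj (X : {set E}) : rel 'I_n := fun u v => [exists e in X, joins e u v].

Definition component (X : {set E}) (u : 'I_n) : {set 'I_n} :=
  [set v | connect (adj X) u v].

Definition bipartite_on (X : {set E}) (C : {set 'I_n}) : bool :=
  [exists col : {ffun 'I_n -> bool},
     [forall e in X, (lab (e, false) \in C) ==>
        (col (lab (e, false)) != col (lab (e, true)))]].

Definition connected_graph : Prop := forall u v, connect (adj setT) u v.

Definition bipartite_graph : bool := bipartite_on setT setT.

Definition static_edge (e : E) : bool :=
  [exists u, bipartite_on (setT :\ e) (component (setT :\ e) u)].

Definition inc (v : 'I_n) (e : E) : nat :=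
  (lab (e, false) == v) + (lab (e, true) == v).

Definition is_cycle_set (X : {set E}) : Prop :=
  exists k (es : k.+1.-tuple E) (vs : k.+1.-tuple 'I_n),
    [/\ uniq es, uniq vs, X = [set x in es] &
        forall i : 'I_k.+1, joins (tnth es i) (tnth vs i) (tnth vs (ordS i))].

Definition trees_or_odd_unicyclic (F : {set E}) : Prop :=
  forall u : 'I_n,
    let FC := [set e in F | lab (e, false) \in component F u] in
    (forall X : {set E}, X \subset FC -> ~ is_cycle_set X) \/
    (exists X : {set E}, [/\ X \subset FC, is_cycle_set X, odd #|X| &
                  forall Y : {set E}, Y \subset FC -> is_cycle_set Y -> Y = X]).

Variable R : realType.

Definition vp (w : {ffun E -> R}) : {ffun 'I_n -> R} :=
  [ffun v => \sum_e (inc v e)%:R * w e].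

Definition inP (b : {ffun 'I_n -> R}) (w : {ffun E -> R}) : Prop :=
  vp w = b /\ forall e, ~~ static_edge e -> 0 <= w e.

Definition Fset (w : {ffun E -> R}) : {set E} :=
  [set e | ~~ static_edge e & 0 < w e].

End Graph.

Definition is_vertex (R : realType) (E : finType) (P : {ffun E -> R} -> Prop)
    (w : {ffun E -> R}) : Prop :=
  P w /\ forall (u v : {ffun E -> R}) (t : R), P u -> P v -> 0 < t < 1 ->
    w = [ffun e => t * u e + (1 - t) * v e] -> u = v.

Definition feasible_dir (R : realType) (E : finType) (P : {ffun E -> R} -> Prop)
    (p v : {ffun E -> R}) : Prop :=
  exists eps : R, 0 < eps /\ P [ffun e => p e + eps * v e].

Definition is_ribbon_graph (g n : nat) (kappa : seq nat) (E : finType)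
    (s0 : {perm E * bool}) (lab : E * bool -> 'I_n) : Prop :=
  [/\ (forall d d', (lab d == lab d') = fconnect s0 d d') /\
        (forall i, exists d, lab d = i),
      connected_graph lab,
      all odd kappa,
      perm_eq [seq fingraph.order (sigma2 s0) d | d <- enum (froots (sigma2 s0))] kappa &
      (n + size kappa + 2 * g = #|E| + 2)%N ].

(* A point w of P_G(b) is a vertex iff no nonzero v with vp v = 0 vanishes
   outside F = {e notin S(G) : w e > 0}; such a v would let w move in both
   directions, since kernel vectors vanish on static edges anyway (pair vp v = 0
   with a +-1 colouring of the bipartite component of G - e to isolate v e).
   If a component of F contains an even cycle, or two distinct odd cycles joined
   by a path, the alternating +-1 weights of a closed walk of even length through
   them form such a v.  Conversely, the support of a kernel vector has no dead
   ends, hence contains a cycle; in a tree or one-odd-cycle component that cycle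
   is the odd one and carries every nonzero edge at its vertices, so the weights
   alternate around an odd cycle and vanish.  Feasible directions are read off
   from the facet inequalities: a short step only has to respect w e >= 0 where
   w e = 0. *)

From HB Require Import structures.
From mathcomp Require Import all_boot all_order all_fingroup all_algebra.
From mathcomp Require Import reals.
From mathcomp Require Import zify ring lra.
From Stdlib Require Import Classical.
Import Order.TTheory GRing.Theory Num.Theory.
Local Open Scope ring_scope.
Set Implicit Arguments. Unset Strict Implicit. Unset Printing Implicit Defensive.

Section Walks.
Variables (E : finType) (n : nat) (lab : E * bool -> 'I_n).

Lemma sigma1K : involutive (@sigma1 E).
Proof. by case=> e b; rewrite /sigma1 /= negbK. Qed.

Lemma joins_dart (d : E * bool) : joins lab d.1 (lab d) (lab (sigma1 d)).
Proof. by case: d => e [] /=; rewrite /joins /sigma1 /= !eqxx ?orbT. Qed.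

Lemma joins_sym e a c : joins lab e a c = joins lab e c a.
Proof. by rewrite /joins orbC. Qed.

Lemma joins_inc e a c y : joins lab e a c -> inc lab y e = ((a == y) + (c == y))%N.
Proof. by rewrite /joins /inc => /orP [] /andP [/eqP -> /eqP ->] //; rewrite addnC. Qed.

Lemma joins_end e a c : joins lab e a c -> a = lab (e, false) \/ a = lab (e, true).
Proof. by rewrite /joins => /orP [] /andP [/eqP -> /eqP ->]; [left|right]. Qed.

Lemma joins_mem e a c a' c' : joins lab e a c -> joins lab e a' c' -> a \in [:: a'; c'].
Proof.
rewrite /joins !inE => /orP[]/andP[/eqP H1 /eqP H2] /orP[]/andP[/eqP H3 /eqP H4];
by subst; rewrite eqxx ?orbT.
Qed.

Definition dart_at (e : E) (a : 'I_n) : E * bool :=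
  if lab (e, false) == a then (e, false) else (e, true).

Lemma dart_atP e a c : joins lab e a c ->
  [/\ (dart_at e a).1 = e, lab (dart_at e a) = a & lab (sigma1 (dart_at e a)) = c].
Proof.
rewrite /joins /dart_at /sigma1 => /orP [] /andP [/eqP H1 /eqP H2]; first by rewrite H1 eqxx.
by case: eqP => //= H3; rewrite H2 -H1 H3.
Qed.

Lemma adj_sym (F : {set E}) : symmetric (adj lab F).
Proof.
by move=> x y; apply/existsP/existsP => -[e /andP[eF J]]; exists e; rewrite eF joins_sym.
Qed.

Lemma adj_edge (F : {set E}) e : e \in F -> adj lab F (lab (e, false)) (lab (e, true)).
Proof. by move=> eF; apply/existsP; exists e; rewrite eF /joins !eqxx. Qed.

Lemma component_edge_end (F : {set E}) u e b :
  e \in F -> lab (e, b) \in component lab F u ->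
  (lab (e, false) \in component lab F u) && (lab (e, true) \in component lab F u).
Proof.
move=> eF; rewrite !inE => ub.
have fwd := adj_edge eF.
have bwd : adj lab F (lab (e, true)) (lab (e, false)) by rewrite adj_sym.
case: b ub => ub.
- by rewrite ub (connect_trans ub (connect1 bwd)).
- by rewrite ub (connect_trans ub (connect1 fwd)).
Qed.

Fixpoint is_walk (a c : 'I_n) (s : seq (E * bool)) : bool :=
  if s is d :: s' then (lab d == a) && is_walk (lab (sigma1 d)) c s' else a == c.

Lemma is_walk_cat a b c s1 s2 :
  is_walk a b s1 -> is_walk b c s2 -> is_walk a c (s1 ++ s2).
Proof.
elim: s1 a => [|d s1 IH] a /=; first by move/eqP->.
by case/andP=> -> /IH H /H.
Qed.

Lemma is_walk_rev a b s : is_walk a b s -> is_walk b a (rev (map (@sigma1 E) s)).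
Proof.
elim: s a => [|d s IH] a /=; first by move/eqP->; rewrite eqxx.
case/andP=> /eqP Hd /IH H; rewrite rev_cons -cats1; apply: is_walk_cat H _ => /=.
by rewrite sigma1K Hd !eqxx.
Qed.

Lemma is_walk_iota (g : nat -> E * bool) m s :
  (forall t, s <= t < s + m -> lab (sigma1 (g t)) = lab (g t.+1))%N ->
  is_walk (lab (g s)) (lab (g (s + m)%N)) (map g (iota s m)).
Proof.
elim: m s => [|m IH] s H /=; first by rewrite addn0 eqxx.
rewrite eqxx H /=; last by rewrite leqnn addnS ltnS leq_addr.
rewrite -addSnnS; apply: IH => t /andP [H1 H2]; apply: H.
by rewrite addnS ltnW //= -addSnnS.
Qed.

Lemma connect_walk (F : {set E}) a c : connect (adj lab F) a c ->
  exists2 P, is_walk a c P & forall d, d \in P -> d.1 \in F.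
Proof.
move/connectP => [p Hp ->]; elim: p a Hp => [|y p IH] a /=.
  by move=> _; exists [::]; rewrite /= ?eqxx.
case/andP => /existsP [e /andP [eF Je]] /IH [P HP HF].
have [H1 H2 H3] := dart_atP Je.
exists (dart_at e a :: P); first by rewrite /= H2 H3 eqxx.
by move=> d; rewrite inE => /orP [/eqP -> | /HF]; rewrite ?H1.
Qed.

End Walks.

Section WalkVectors.
Variables (E : finType) (n : nat) (lab : E * bool -> 'I_n) (R : realType).

Definition kernel_trivial_on (F : {set E}) : Prop :=
  forall v : {ffun E -> R}, vp lab v = 0 -> (forall e, e \notin F -> v e = 0) -> v = 0.

Lemma vp_lincomb (a c : {ffun E -> R}) (t : R) :
  vp lab [ffun e => a e + t * c e] = [ffun x => vp lab a x + t * vp lab c x].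
Proof.
apply/ffunP => x; rewrite /vp !ffunE mulr_sumr -big_split /=.
by apply: eq_bigr => e _; rewrite ffunE; ring.
Qed.

Lemma sum_delta_mul (T : finType) (f : T -> R) i : \sum_j (j == i)%:R * f j = f i.
Proof. by rewrite (bigD1 i) //= eqxx mul1r big1 ?addr0 // => j /negbTE ->; rewrite mul0r. Qed.

Lemma sum_inc_delta (f : E) y :
  \sum_e (inc lab y e)%:R * ((f == e)%:R : R) = (inc lab y f)%:R.
Proof. by under eq_bigr do rewrite mulrC eq_sym; apply: sum_delta_mul. Qed.

Lemma inc_dart (d : E * bool) y :
  inc lab y d.1 = ((lab d == y) + (lab (sigma1 d) == y))%N.
Proof. by case: d => e []; rewrite /inc /sigma1 // addnC. Qed.

Fixpoint alt_mult (s : seq (E * bool)) (e : E) : int :=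
  if s is d :: s' then (d.1 == e)%:Z - alt_mult s' e else 0.

Lemma alt_mult_neq0 s e : odd (count (fun d => d.1 == e) s) -> alt_mult s e != 0.
Proof.
have [z ->] : exists z : int, alt_mult s e = (count (fun d => d.1 == e) s)%:Z - 2 * z.
  elim: s => [|d s [z IH]] /=; first by exists 0.
  by exists ((count (fun d => d.1 == e) s)%:Z - z); rewrite IH PoszD; ring.
set c := count _ _ => Hc; apply/eqP => H.
have H2 : c%:Z = 2 * z by apply/eqP; rewrite -subr_eq0 H.
have := odd_double_half c; rewrite Hc => Hc2.
move: H2; rewrite -Hc2 -muln2; lia.
Qed.

Lemma alt_mult_notin s e : (forall d, d \in s -> d.1 != e) -> alt_mult s e = 0.
Proof.
elim: s => [|d s IH] //= H.
rewrite IH => [|d' Hd']; last by apply: H; rewrite inE Hd' orbT.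
by rewrite (negbTE (H d (mem_head _ _))) subr0.
Qed.

Definition walk_vec (s : seq (E * bool)) : {ffun E -> R} :=
  [ffun e => (alt_mult s e)%:~R].

Lemma vp_walk_vec a c s y : is_walk lab a c s ->
  vp lab (walk_vec s) y = (a == y)%:R - (-1) ^+ size s * (c == y)%:R.
Proof.
elim: s a => [|d s IH] a /=.
  move/eqP ->; rewrite expr0 mul1r subrr ffunE.
  by rewrite big1 // => e _; rewrite ffunE mulr0.
case/andP => /eqP <- /IH {}IH; rewrite exprS mulN1r mulNr opprK.
transitivity ((inc lab y d.1)%:R - vp lab (walk_vec s) y : R); last first.
  by rewrite IH inc_dart natrD; ring.
rewrite !ffunE -sum_inc_delta -sumrB; apply: eq_bigr => e _.
by rewrite !ffunE intrD intrN mulrDr mulrN; case: (d.1 == e).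
Qed.

Lemma closed_walk_kernel (F : {set E}) W a e :
  is_walk lab a a W -> ~~ odd (size W) -> (forall d, d \in W -> d.1 \in F) ->
  odd (count (fun d => d.1 == e) W) -> ~ kernel_trivial_on F.
Proof.
move=> HW Hs HF He /(_ (walk_vec W)) H0.
have /ffunP/(_ e) : walk_vec W = 0.
  apply: H0 => [|e' He'].
    apply/ffunP => y; rewrite (vp_walk_vec _ HW) ffunE.
    by rewrite -signr_odd (negbTE Hs) expr0 mul1r subrr.
  rewrite ffunE alt_mult_notin //.
  by move=> d Hd; apply: contraNneq He' => <-; apply: HF.
by rewrite !ffunE => /eqP; rewrite intr_eq0; apply/negP/alt_mult_neq0.
Qed.

End WalkVectors.

Lemma modSm x d : ((x %% d).+1 %% d = x.+1 %% d)%N.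
Proof. by rewrite -addn1 modnDml addn1. Qed.

Lemma tnth_uniq_eq k (T : eqType) (t : k.-tuple T) i j :
  uniq t -> (tnth t i == tnth t j) = (i == j).
Proof. by move/tuple_uniqP => U; apply/eqP/eqP => [/U|->]. Qed.

Section CycleWalk.
Variables (E : finType) (n : nat) (lab : E * bool -> 'I_n).
Variables (k : nat) (es : k.+1.-tuple E) (vs : k.+1.-tuple 'I_n).
Hypothesis es_joins : forall i, joins lab (tnth es i) (tnth vs i) (tnth vs (ordS i)).

Definition cycle_dart (t : nat) : E * bool :=
  dart_at lab (tnth es (inord (t %% k.+1))) (tnth vs (inord (t %% k.+1))).

Definition cycle_walk : seq (E * bool) := map cycle_dart (iota 0 k.+1).

Lemma cycle_dartP t :
  [/\ (cycle_dart t).1 = tnth es (inord (t %% k.+1)),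
      lab (cycle_dart t) = tnth vs (inord (t %% k.+1)) &
      lab (sigma1 (cycle_dart t)) = lab (cycle_dart t.+1)].
Proof.
have [-> -> ->] := dart_atP (es_joins (inord (t %% k.+1))).
have [_ -> _] := dart_atP (es_joins (inord (t.+1 %% k.+1))).
by split=> //; congr tnth; apply: val_inj; rewrite /= !inordK ?ltn_pmod // modSm.
Qed.

Lemma is_walk_cycle_walk : is_walk lab (tnth vs ord0) (tnth vs ord0) cycle_walk.
Proof.
have := is_walk_iota (g := cycle_dart) (m := k.+1) (s := 0)
  (fun t _ => let: And3 _ _ H := cycle_dartP t in H).
have [_ -> _] := cycle_dartP 0; have [_ -> _] := cycle_dartP (0 + k.+1).
rewrite add0n modnn mod0n.
by have -> : @inord k 0 = ord0 by apply: val_inj; rewrite /= inordK.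
Qed.

Lemma size_cycle_walk : size cycle_walk = k.+1.
Proof. by rewrite size_map size_iota. Qed.

Lemma cycle_walk_edges d : d \in cycle_walk -> d.1 \in es.
Proof. by case/mapP => t _ ->; have [-> _ _] := cycle_dartP t; apply: mem_tnth. Qed.

Lemma count_cycle_walk i : uniq es ->
  count (fun d => d.1 == tnth es i) cycle_walk = 1%N.
Proof.
move=> U; rewrite count_map (@eq_in_count _ _ (pred1 (val i))); last first.
  move=> t; rewrite mem_iota add0n => Ht /=; have [-> _ _] := cycle_dartP t.
  by rewrite modn_small // tnth_uniq_eq // -val_eqE /= inordK.
by rewrite count_uniq_mem ?iota_uniq // mem_iota add0n ltn_ord.
Qed.

End CycleWalk.

Section CycleKernels.
Variables (E : finType) (n : nat) (lab : E * bool -> 'I_n) (R : realType).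

Definition component_edges (F : {set E}) (u : 'I_n) : {set E} :=
  [set e in F | lab (e, false) \in component lab F u].

Lemma component_edges_sub (F : {set E}) u : component_edges F u \subset F.
Proof. by apply/subsetP => e; rewrite inE => /andP []. Qed.

Lemma card_cycle_set k (es : k.+1.-tuple E) : uniq es -> #|[set x in es]| = k.+1.
Proof. by move=> U; rewrite cardsE (card_uniqP U) size_tuple. Qed.

Lemma cycle_vertex_component (F : {set E}) u k (es : k.+1.-tuple E) vs i :
  [set x in es] \subset component_edges F u ->
  joins lab (tnth es i) (tnth vs i) (tnth vs (ordS i)) ->
  connect (adj lab F) u (tnth vs i).
Proof.
move=> /subsetP/(_ (tnth es i)); rewrite !inE mem_tnth => /(_ isT) /andP [eF Hc] J.
have /andP [H0 H1] := component_edge_end (b := false) eF (etrans (in_set _ _) Hc).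
by case: (joins_end J) => ->; rewrite -in_set.
Qed.

Lemma even_cycle_kernel (F X : {set E}) :
  X \subset F -> is_cycle_set lab X -> ~~ odd #|X| -> ~ kernel_trivial_on lab R F.
Proof.
move=> /subsetP XF [k [es [vs [Ues _ HX J]]]]; rewrite HX card_cycle_set // => Ho.
apply: (closed_walk_kernel (is_walk_cycle_walk J) _ _ (e := tnth es ord0)).
- by rewrite size_cycle_walk.
- by move=> d /(cycle_walk_edges J) He; apply: XF; rewrite HX inE.
- by rewrite count_cycle_walk.
Qed.

Lemma odd_cycles_walk_kernel (F : {set E}) k1 (es1 : k1.+1.-tuple E) vs1
    k2 (es2 : k2.+1.-tuple E) vs2 e :
  uniq es1 -> (forall i, joins lab (tnth es1 i) (tnth vs1 i) (tnth vs1 (ordS i))) ->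
  (forall i, joins lab (tnth es2 i) (tnth vs2 i) (tnth vs2 (ordS i))) ->
  {subset es1 <= F} -> {subset es2 <= F} -> odd k1.+1 -> odd k2.+1 ->
  e \in es1 -> e \notin es2 -> connect (adj lab F) (tnth vs1 ord0) (tnth vs2 ord0) ->
  ~ kernel_trivial_on lab R F.
Proof.
move=> U1 J1 J2 es1F es2F o1 o2 e1 e2 /connect_walk [P HP PF].
pose W := cycle_walk lab es1 vs1 ++ P ++ cycle_walk lab es2 vs2 ++ rev (map (@sigma1 E) P).
have HW : is_walk lab (tnth vs1 ord0) (tnth vs1 ord0) W.
  apply: is_walk_cat (is_walk_cycle_walk J1) (is_walk_cat HP _).
  exact: is_walk_cat (is_walk_cycle_walk J2) (is_walk_rev HP).
apply: (closed_walk_kernel HW _ _ (e := e)).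
- rewrite !size_cat !size_cycle_walk size_rev size_map !oddD o1 o2.
  by case: (odd (size P)).
- move=> d; rewrite !mem_cat mem_rev.
  case/or4P => [/(cycle_walk_edges J1)/es1F|/PF|/(cycle_walk_edges J2)/es2F|] //.
  by case/mapP => d' /PF Hd' ->.
- have c2 : count (fun d => d.1 == e) (cycle_walk lab es2 vs2) = 0%N.
    apply/eqP; rewrite -leqn0 leqNgt -has_count; apply/hasPn => d Hd /=.
    by apply: contraNneq e2 => <-; apply: (cycle_walk_edges J2 Hd).
  rewrite !count_cat count_rev c2 add0n.
  case/tnthP: e1 => i ->; rewrite (count_cycle_walk J1 i U1) count_map.
  by rewrite (eq_count (a2 := fun d => d.1 == tnth es1 i)) // oddD oddD addbb.
Qed.

Lemma odd_cycles_kernel (F X Y : {set E}) u :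
  X \subset component_edges F u -> Y \subset component_edges F u ->
  is_cycle_set lab X -> is_cycle_set lab Y -> odd #|X| -> odd #|Y| -> X != Y ->
  ~ kernel_trivial_on lab R F.
Proof.
wlog [e eX eY] : X Y / exists2 e, e \in X & e \notin Y.
  move=> Hw XC YC Xc Yc Xo Yo XY; case: (boolP (X \subset Y)) => [XsY|].
    have /subsetPn [e eY eX] : ~~ (Y \subset X).
      by apply: contra XY => YsX; rewrite eqEsubset XsY.
    by apply: (Hw Y X) => //; [exists e | rewrite eq_sym].
  by case/subsetPn => e eX eY; apply: (Hw X Y) => //; exists e.
move=> XC YC [k1 [es1 [vs1 [U1 _ HX J1]]]] [k2 [es2 [vs2 [U2 _ HY J2]]]] Xo Yo _.
subst X Y; rewrite !card_cycle_set // in Xo Yo; rewrite !inE in eX eY.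
have sub_F k (es : k.+1.-tuple E) : [set x in es] \subset component_edges F u -> {subset es <= F}.
  move=> /subset_trans/(_ (component_edges_sub F u))/subsetP esF x xes.
  by apply: esF; rewrite inE.
apply: (odd_cycles_walk_kernel U1 J1 J2 (sub_F _ _ XC) (sub_F _ _ YC) Xo Yo eX eY).
have := cycle_vertex_component XC (J1 ord0).
rewrite (sym_connect_sym (adj_sym lab F)) => /connect_trans; apply.
exact: cycle_vertex_component YC (J2 ord0).
Qed.

Lemma kernel_trivial_trees (F : {set E}) :
  kernel_trivial_on lab R F -> trees_or_odd_unicyclic lab F.
Proof.
move=> Hk u; apply: NNPP; cbv zeta; fold (component_edges F u).
set FC := component_edges F u => /not_or_and [Hacyc Huni].
have FCF : FC \subset F := component_edges_sub F u.
have [X [XFC Xc]] : exists X : {set E}, X \subset FC /\ is_cycle_set lab X.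
  by apply: NNPP => H; apply: Hacyc => X XFC Xc; apply: H; exists X.
have [Xo|Xe] := boolP (odd #|X|); last exact: even_cycle_kernel (subset_trans XFC FCF) Xc Xe Hk.
have [Y [YFC Yc YX]] : exists Y : {set E}, [/\ Y \subset FC, is_cycle_set lab Y & Y != X].
  apply: NNPP => H; apply: Huni; exists X; split=> // Y YFC Yc.
  by apply: NNPP => YX; apply: H; exists Y; split=> //; apply/eqP.
have [Yo|Ye] := boolP (odd #|Y|); last exact: even_cycle_kernel (subset_trans YFC FCF) Yc Ye Hk.
by apply: (odd_cycles_kernel XFC YFC Xc Yc Xo Yo _ Hk); rewrite eq_sym.
Qed.

End CycleKernels.

Lemma exists_first_repeat (T : finType) (a : nat -> T) :
  exists i j, [/\ (i < j)%N, a i = a j &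
    forall x y, (x < j)%N -> (y < j)%N -> a x = a y -> x = y].
Proof.
have ex : exists j, [exists i : 'I_j, a i == a j].
  have /injectivePn [x [y xy axy]] : ~~ injectiveb (fun i : 'I_#|T|.+1 => a i).
    by apply/injectiveP => /leq_card; rewrite card_ord ltnn.
  wlog lt_xy : x y xy axy / (x < y)%N.
    move=> Hw; case: (ltngtP x y) => [|lt_yx|/val_inj Exy]; first exact: Hw.
      by apply: (Hw y x) => //; rewrite eq_sym.
    by rewrite Exy eqxx in xy.
  by exists y; apply/existsP; exists (Ordinal lt_xy); rewrite axy.
case: (ex_minnP ex) => j /existsP [i /eqP aij] jmin.
exists i, j; split=> // x y xj yj axy; apply/eqP; apply: contraT => xy.
wlog lt_xy : x y xj yj axy xy / (x < y)%N.
  move=> Hw; case: (ltngtP x y) => [|lt_yx|Exy]; first exact: Hw.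
    by apply: (Hw y x) => //; rewrite eq_sym.
  by rewrite Exy eqxx in xy.
have /jmin : [exists i : 'I_y, a i == a y] by apply/existsP; exists (Ordinal lt_xy); rewrite axy.
by rewrite leqNgt yj.
Qed.

Section DeadEndFree.
Variables (E : finType) (n : nat) (lab : E * bool -> 'I_n).

Lemma dart_other (d d' : E * bool) : d.1 = d'.1 -> d != d' -> d' = sigma1 d.
Proof.
case: d d' => e b [e' b'] /= <-; rewrite /sigma1 /=.
by case: b b' => [] []; rewrite ?eqxx.
Qed.

Lemma ordSS_neq k (t : 'I_k.+1) : (1 < k)%N -> ordS (ordS t) != t.
Proof.
move=> Hk; apply/eqP => /(congr1 val) /=; rewrite modSm.
have Ht := ltn_ord t.
case: (ltngtP t.+1 k) => H.
- by rewrite modn_small; lia.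
- have -> : t.+2 = (1 + k.+1)%N by lia.
  by rewrite modnDr modn_small; lia.
- by rewrite H modnn; lia.
Qed.

(* The last hypothesis excludes a walk of length two returning along its edge. *)
Lemma cycle_of_closed_walk k (D : 'I_k.+1 -> E * bool) :
  injective (fun t => lab (D t)) ->
  (forall t, lab (sigma1 (D t)) = lab (D (ordS t))) ->
  (k = 1%N -> D (ordS ord0) != sigma1 (D ord0)) ->
  [/\ uniq [tuple (D t).1 | t < k.+1], uniq [tuple lab (D t) | t < k.+1] &
      forall t, joins lab (tnth [tuple (D t).1 | t < k.+1] t)
                  (tnth [tuple lab (D t) | t < k.+1] t)
                  (tnth [tuple lab (D t) | t < k.+1] (ordS t))].
Proof.
move=> Dinj Dnext Dback; split; last first.
- by move=> t; rewrite !tnth_mktuple -Dnext; apply: joins_dart.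
- by apply/tuple_uniqP => t t'; rewrite !tnth_mktuple; apply: Dinj.
apply/tuple_uniqP => t t'; rewrite !tnth_mktuple => He.
apply/eqP; apply: contraT => Htt.
have Hd : D t != D t' by apply: contra Htt => /eqP Hd; apply/eqP/Dinj; rewrite /= Hd.
have E1 := dart_other He Hd.
have E2 : D t = sigma1 (D t') by rewrite E1 sigma1K.
(* The two darts of a repeated edge would be consecutive both ways round. *)
have T1 : t' = ordS t by apply: Dinj; rewrite /= E1 Dnext.
have T2 : t = ordS t' by apply: Dinj; rewrite /= E2 Dnext.
case: (ltngtP k 1) => Hk.
- suff /eqP tt' : t = t' by rewrite tt' in Htt.
  by apply: val_inj => /=; have := ltn_ord t; have := ltn_ord t'; lia.
- by have := ordSS_neq t Hk; rewrite -T1 -T2 eqxx.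
- subst k; case: (eqVneq t ord0) => [Ht0|Ht0].
    by move: T1 E1; rewrite Ht0 => T1 E1; have := Dback erefl; rewrite -T1 E1 eqxx.
  have Ht' : t' = ord0.
    apply: val_inj; move: Htt Ht0; rewrite -!val_eqE /=.
    by have := ltn_ord t; have := ltn_ord t'; lia.
  by move: T2 E2; rewrite Ht' => T2 E2; have := Dback erefl; rewrite -T2 E2 eqxx.
Qed.

Definition dead_end_free (S : {set E}) : Prop :=
  forall d : E * bool, d.1 \in S ->
    exists d', [&& d' != sigma1 d, lab d' == lab (sigma1 d) & d'.1 \in S].

Lemma dead_end_free_walk (S : {set E}) (d0 : E * bool) :
  dead_end_free S -> d0.1 \in S ->
  exists ds : nat -> E * bool,
    [/\ ds 0 = d0, forall t, (ds t).1 \in S,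
        forall t, lab (ds t.+1) = lab (sigma1 (ds t)) & forall t, ds t.+1 != sigma1 (ds t)].
Proof.
move=> Sfree d0S.
pose next d := odflt d [pick d' | [&& d' != sigma1 d, lab d' == lab (sigma1 d) & d'.1 \in S]].
have nextP d : d.1 \in S ->
    [&& next d != sigma1 d, lab (next d) == lab (sigma1 d) & (next d).1 \in S].
  move=> dS; rewrite /next; case: pickP => [d' //|none].
  by have [d' Hd'] := Sfree d dS; rewrite none in Hd'.
have dsS t : (iter t next d0).1 \in S by elim: t => //= t IH; case/and3P: (nextP _ IH).
exists (fun t => iter t next d0); split=> // t.
  by case/and3P: (nextP _ (dsS t)) => _ /eqP.
by case/and3P: (nextP _ (dsS t)).
Qed.

Lemma dead_end_free_cycle (S : {set E}) (d0 : E * bool) :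
  dead_end_free S -> d0.1 \in S ->
  exists k (es : k.+1.-tuple E) (vs : k.+1.-tuple 'I_n),
    [/\ uniq es, uniq vs, forall i, joins lab (tnth es i) (tnth vs i) (tnth vs (ordS i)),
        {subset es <= S} & lab d0 \in vs -> d0.1 \in es].
Proof.
move=> /dead_end_free_walk/[apply] -[ds [ds0 dsS ds_lab ds_back]].
have [i [j [lt_ij aij ainj]]] := exists_first_repeat (fun t => lab (ds t)).
pose k := (j - i).-1.
have Hk : k.+1 = (j - i)%N by rewrite /k prednK // subn_gt0.
pose D (t : 'I_k.+1) := ds (i + t)%N.
have Dinj : injective (fun t => lab (D t)).
  move=> t t' /= /ainj Htt'; apply/val_inj/eqP; rewrite -(eqn_add2l i) Htt' //;
  by have := ltn_ord t; have := ltn_ord t'; lia.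
have Dnext t : lab (sigma1 (D t)) = lab (D (ordS t)).
  rewrite -ds_lab; case: (ltngtP t k) => Htk; rewrite /D /=.
  - by rewrite modn_small ?addnS // ltnS.
  - by have := ltn_ord t; rewrite ltnS leqNgt Htk.
  - by rewrite Htk modnn addn0 aij; have -> : j = (i + k).+1 by lia.
have Dback : k = 1%N -> D (ordS ord0) != sigma1 (D ord0).
  move=> k1; have e1 : nat_of_ord (ordS (@ord0 k)) = 1%N by rewrite /= k1.
  by rewrite /D e1 addn0 addn1.
have [Ues Uvs J] := cycle_of_closed_walk Dinj Dnext Dback.
exists k, [tuple (D t).1 | t < k.+1], [tuple lab (D t) | t < k.+1]; split => //.
- by move=> x /tnthP [t ->]; rewrite tnth_mktuple dsS.
- move=> /tnthP [t]; rewrite tnth_mktuple -ds0 => Ht.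
  have H0 : (i + t = 0)%N by apply: ainj; rewrite -?Ht //; have := ltn_ord t; lia.
  by apply/tnthP; exists t; rewrite tnth_mktuple /D H0.
Qed.

Lemma cycle_vertex_mem k1 (es1 : k1.+1.-tuple E) vs1 k2 (es2 : k2.+1.-tuple E) vs2 :
  (forall i, joins lab (tnth es1 i) (tnth vs1 i) (tnth vs1 (ordS i))) ->
  (forall i, joins lab (tnth es2 i) (tnth vs2 i) (tnth vs2 (ordS i))) ->
  [set x in es1] = [set x in es2] -> forall m, tnth vs1 m \in vs2.
Proof.
move=> J1 J2 Heq m.
have : tnth es1 m \in [set x in es1] by rewrite inE mem_tnth.
rewrite Heq inE => /tnthP [t Ht].
have := J1 m; rewrite Ht => /joins_mem/(_ (J2 t)).
by rewrite !inE => /orP [] /eqP ->; apply: mem_tnth.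
Qed.

End DeadEndFree.

Section CycleBalance.
Variables (E : finType) (n : nat) (lab : E * bool -> 'I_n) (R : realType).

Lemma vp_darts (v : {ffun E -> R}) y :
  vp lab v y = \sum_(d : E * bool) (lab d == y)%:R * v d.1.
Proof.
rewrite ffunE; transitivity (\sum_(d : E * bool) (lab (d.1, d.2) == y)%:R * v d.1).
  rewrite -(pair_bigA _ (fun e b => (lab (e, b) == y)%:R * v e)) /=.
  by apply: eq_bigr => e _; rewrite big_bool /inc natrD mulrDl addrC.
by apply: eq_bigr => -[e b].
Qed.

Lemma cycle_vertex_balance k (es : k.+1.-tuple E) (vs : k.+1.-tuple 'I_n)
    (v : {ffun E -> R}) i :
  uniq es -> uniq vs -> (forall j, joins lab (tnth es j) (tnth vs j) (tnth vs (ordS j))) ->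
  vp lab v (tnth vs i) = 0 ->
  (forall e, e \notin es -> v e != 0 -> inc lab (tnth vs i) e = 0%N) ->
  v (tnth es i) + v (tnth es (ord_pred i)) = 0.
Proof.
move=> Ues Uvs J vp0 off_es; rewrite -vp0 ffunE.
rewrite (bigID (fun e => e \in es)) /= [X in _ = _ + X]big1 ?addr0; last first.
  move=> e He; have [->|Hv] := eqVneq (v e) 0; first by rewrite mulr0.
  by rewrite off_es //; apply: mul0r.
rewrite -big_uniq // big_tuple.
under eq_bigr => j _ do rewrite (joins_inc _ (J j)) !tnth_uniq_eq // natrD mulrDl.
rewrite big_split /= !sum_delta_mul; congr (_ + _).
under eq_bigr => j _ do rewrite -[ordS j == i](inj_eq (@ord_pred_inj _)) ordSK.
by rewrite sum_delta_mul.
Qed.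

Lemma alternating_odd_cycle_eq0 k (f : 'I_k.+1 -> R) :
  odd k.+1 -> (forall i, f (ordS i) = - f i) -> forall i, f i = 0.
Proof.
move=> Ho Hf i.
have f_iter t : f (iter t (@ordS _) i) = (-1) ^+ t * f i.
  by elim: t => [|t IH]; rewrite ?expr0 ?mul1r //= Hf IH exprS mulN1r mulNr.
have iter_val t : nat_of_ord (iter t (@ordS _) i) = ((i + t) %% k.+1)%N.
  elim: t => [|t IH]; first by rewrite addn0 modn_small.
  by rewrite iterS /= IH modSm addnS.
have iter_period : iter k.+1 (@ordS _) i = i.
  by apply: val_inj; have := iter_val k.+1; rewrite modnDr modn_small.
by have := f_iter k.+1; rewrite iter_period -signr_odd Ho expr1 mulN1r; lra.
Qed.

End CycleBalance.

Section ComponentSupport.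
Variables (E : finType) (n : nat) (lab : E * bool -> 'I_n) (R : realType).
Variables (F : {set E}) (v : {ffun E -> R}) (u : 'I_n).
Hypotheses (v_ker : vp lab v = 0) (v_supp : forall e, e \notin F -> v e = 0).

Let C := component lab F u.

Definition comp_support : {set E} := [set e | (v e != 0) && (lab (e, false) \in C)].
Let S := comp_support.

Lemma support_sub e : v e != 0 -> e \in F.
Proof. by move=> ve; apply: contraT => /v_supp ve0; rewrite ve0 eqxx in ve. Qed.

Lemma mem_comp_support e b : v e != 0 -> lab (e, b) \in C -> e \in S.
Proof.
move=> ve Hb; rewrite inE ve.
by case/andP: (component_edge_end (support_sub ve) Hb).
Qed.

Lemma comp_supportP e :
  e \in S -> [/\ v e != 0, e \in F, lab (e, false) \in C & lab (e, true) \in C].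
Proof.
rewrite inE => /andP [ve Hc]; have eF := support_sub ve.
by case/andP: (component_edge_end eF Hc).
Qed.

Lemma comp_support_dead_end_free : dead_end_free lab S.
Proof.
move=> d dS; have [ve _ d0C d1C] := comp_supportP dS.
have yC : lab (sigma1 d) \in C by rewrite /sigma1; case: (d.2).
apply: NNPP => none.
have /eqP := vp_darts lab v (lab (sigma1 d)); rewrite v_ker ffunE eq_sym.
rewrite (bigD1 (sigma1 d)) //= eqxx mul1r big1 ?addr0 => [|d' Hd'].
  by rewrite (negbTE ve).
have [Hl|] := eqVneq (lab d') (lab (sigma1 d)); last by rewrite mul0r.
have [->|vd'] := eqVneq (v d'.1) 0; first by rewrite mulr0.
case: none; exists d'; rewrite Hd' Hl eqxx /=.
by apply: (mem_comp_support (b := d'.2) vd'); rewrite -surjective_pairing Hl.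
Qed.

Lemma comp_support_cycle d : d.1 \in S ->
  exists k (es : k.+1.-tuple E) (vs : k.+1.-tuple 'I_n),
    [/\ is_cycle_set lab [set x in es], [set x in es] \subset component_edges lab F u,
        {subset es <= S}, forall i, joins lab (tnth es i) (tnth vs i) (tnth vs (ordS i)) &
        lab d \in vs -> d.1 \in es].
Proof.
move=> dS; have [k [es [vs [Ues Uvs J esS Hd]]]] :=
  dead_end_free_cycle comp_support_dead_end_free dS.
exists k, es, vs; split=> //; first by exists k, es, vs.
apply/subsetP => x; rewrite inE => /esS /comp_supportP [_ xF xC _].
by rewrite /component_edges in_set xF xC.
Qed.

Lemma comp_support_no_cycle :
  (forall X : {set E}, X \subset component_edges lab F u -> ~ is_cycle_set lab X) ->
  forall e, e \notin S.
Proof.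
move=> acyc e; apply/negP => eS.
have [k [es [vs [Xc XFC _ _ _]]]] := comp_support_cycle (d := (e, false)) eS.
exact: acyc XFC Xc.
Qed.

Section OddCycle.
Variables (k : nat) (es : k.+1.-tuple E) (vs : k.+1.-tuple 'I_n).
Hypotheses (Ues : uniq es) (Uvs : uniq vs)
  (J : forall i, joins lab (tnth es i) (tnth vs i) (tnth vs (ordS i)))
  (es_comp : [set x in es] \subset component_edges lab F u)
  (es_unique : forall Y : {set E},
     Y \subset component_edges lab F u -> is_cycle_set lab Y -> Y = [set x in es]).

Lemma comp_support_cycle_eq d : d.1 \in S ->
  exists k' (es' : k'.+1.-tuple E) (vs' : k'.+1.-tuple 'I_n),
    [/\ [set x in es'] = [set x in es], {subset es' <= S},
        forall i, joins lab (tnth es' i) (tnth vs' i) (tnth vs' (ordS i)) &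
        lab d \in vs' -> d.1 \in es'].
Proof.
move=> dS; have [k' [es' [vs' [Yc YFC YS J' Hd]]]] := comp_support_cycle dS.
by exists k', es', vs'; split=> //; apply: es_unique.
Qed.

Lemma cycle_sub_comp_support e : e \in S -> {subset es <= S}.
Proof.
move=> eS x xes; have [k' [es' [vs' [Y_X YS _ _]]]] := comp_support_cycle_eq (d := (e, false)) eS.
have : x \in [set y in es'] by rewrite Y_X inE.
by rewrite inE => /YS.
Qed.

(* A nonzero edge at a cycle vertex lies in S, and the cycle found by walking
   from it is the unique one and passes through it. *)
Lemma inc_off_cycle i e : e \notin es -> v e != 0 -> inc lab (tnth vs i) e = 0%N.
Proof.
move=> ees ve; apply/eqP; rewrite /inc addn_eq0 !eqb0; apply/andP.
suff on_es b : lab (e, b) != tnth vs i by rewrite !on_es.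
apply/negP => /eqP Hb.
have viC : tnth vs i \in C by rewrite inE; apply: cycle_vertex_component es_comp (J i).
have eS : (e, b).1 \in S by apply: (mem_comp_support (b := b) ve); rewrite Hb.
have [k' [es' [vs' [Y_X _ J' Hd]]]] := comp_support_cycle_eq eS.
move: (cycle_vertex_mem J J' (esym Y_X) i); rewrite -Hb => /Hd /= ees'.
have : e \in [set y in es] by rewrite -Y_X inE.
by rewrite inE (negbTE ees).
Qed.

Lemma cycle_alternating i : v (tnth es (ordS i)) = - v (tnth es i).
Proof.
have vp0 : vp lab v (tnth vs (ordS i)) = 0 by rewrite v_ker ffunE.
have := cycle_vertex_balance Ues Uvs J vp0 (@inc_off_cycle _).
by rewrite ordSK => /eqP; rewrite addr_eq0 => /eqP.
Qed.

End OddCycle.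

Lemma comp_support_odd_cycle (X : {set E}) :
  X \subset component_edges lab F u -> is_cycle_set lab X -> odd #|X| ->
  (forall Y : {set E}, Y \subset component_edges lab F u -> is_cycle_set lab Y -> Y = X) ->
  forall e, e \notin S.
Proof.
move=> XFC [k [es [vs [Ues Uvs HX J]]]]; subst X; rewrite card_cycle_set // => Xo Xuni e.
apply/negP => /(cycle_sub_comp_support Xuni) es_S.
have [ve _ _ _] := comp_supportP (es_S _ (mem_tnth ord0 es)).
by rewrite (alternating_odd_cycle_eq0 Xo (cycle_alternating Ues Uvs J XFC Xuni)) eqxx in ve.
Qed.

End ComponentSupport.

Lemma trees_kernel_trivial (E : finType) n (lab : E * bool -> 'I_n) (R : realType) F :
  trees_or_odd_unicyclic lab F -> kernel_trivial_on lab R F.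
Proof.
move=> Htr v v_ker v_supp; apply/ffunP => e; rewrite ffunE; apply/eqP; apply: contraT => ve.
have eS : e \in comp_support lab F v (lab (e, false)) by rewrite inE ve inE connect0.
have [acyc | [X [XFC Xc Xo Xuni]]] := Htr (lab (e, false)).
  by rewrite (negbTE (comp_support_no_cycle v_ker v_supp acyc e)) in eS.
by rewrite (negbTE (comp_support_odd_cycle v_ker v_supp XFC Xc Xo Xuni e)) in eS.
Qed.

Lemma kernel_trivial_onP (E : finType) n (lab : E * bool -> 'I_n) (R : realType) F :
  kernel_trivial_on lab R F <-> trees_or_odd_unicyclic lab F.
Proof. by split; [apply: kernel_trivial_trees | apply: trees_kernel_trivial]. Qed.

Section StaticEdges.
Variables (E : finType) (n : nat) (lab : E * bool -> 'I_n) (R : realType).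
Hypotheses (G_conn : connected_graph lab) (G_nonbip : ~~ bipartite_graph lab).

Lemma sum_mul_vp (g : 'I_n -> R) (v : {ffun E -> R}) :
  \sum_x g x * vp lab v x = \sum_f v f * (g (lab (f, false)) + g (lab (f, true))).
Proof.
under eq_bigr do rewrite ffunE mulr_sumr.
rewrite exchange_big; apply: eq_bigr => f _.
transitivity (v f * \sum_x ((x == lab (f, false))%:R * g x + (x == lab (f, true))%:R * g x)).
  rewrite mulr_sumr; apply: eq_bigr => x _.
  by rewrite /inc natrD ![lab _ == x]eq_sym; ring.
by rewrite big_split /= !sum_delta_mul.
Qed.

Lemma edge_closed_set_full (C : {set 'I_n}) u :
  (forall f, (lab (f, false) \in C) = (lab (f, true) \in C)) -> u \in C -> forall y, y \in C.
Proof.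
move=> Cf uC y; rewrite -(closed_connect _ (G_conn u y)) //.
by move=> x z /existsP [f /andP [_ /orP [] /andP [/eqP <- /eqP <-]]]; rewrite Cf.
Qed.

Lemma static_kernel_eq0 (v : {ffun E -> R}) e :
  vp lab v = 0 -> static_edge lab e -> v e = 0.
Proof.
move=> v_ker /existsP [u0 /existsP [col /forallP col_ok]].
set C := component lab (setT :\ e) u0 in col_ok.
have C_closed f : f != e -> (lab (f, false) \in C) = (lab (f, true) \in C).
  move=> fe; have fG : f \in setT :\ e by rewrite in_setD1 in_setT fe.
  by apply/idP/idP => fC; case/andP: (component_edge_end fG fC).
have col_proper f : f != e -> lab (f, false) \in C -> col (lab (f, false)) != col (lab (f, true)).
  by move=> fe fC; have := col_ok f; rewrite in_setD1 in_setT fe fC.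
have C_full : (lab (e, false) \in C) = (lab (e, true) \in C) -> forall y, y \in C.
  move=> eC; apply: (edge_closed_set_full (u := u0)); last by rewrite inE connect0.
  by move=> f; have [->|/C_closed] := eqVneq f e.
pose g x : R := if x \in C then (-1) ^+ col x else 0.
have g_edge f : f != e -> g (lab (f, false)) + g (lab (f, true)) = 0.
  move=> fe; rewrite /g -C_closed //; case: ifP => [fC|]; last by rewrite addr0.
  by move: (col_proper f fe fC); case: (col _); case: (col _) => //= _; rewrite ?expr0 ?expr1; lra.
have g_e : g (lab (e, false)) + g (lab (e, true)) != 0.
  rewrite /g; have [a|a] := boolP (lab (e, false) \in C); have [c|c] := boolP (lab (e, true) \in C).
  - have [same|diff] := eqVneq (col (lab (e, false))) (col (lab (e, true))).
      by rewrite same; case: (col _); rewrite /= ?expr0 ?expr1; apply/eqP; lra.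
    case/negP: G_nonbip; apply/existsP; exists col; apply/forallP => f.
    apply/implyP => _; apply/implyP => _; have [->//|fe] := eqVneq f e.
    by apply: col_proper fe (C_full _ _); rewrite a c.
  - by rewrite addr0; case: (col _); rewrite /= ?expr0 ?expr1; apply/eqP; lra.
  - by rewrite add0r; case: (col _); rewrite /= ?expr0 ?expr1; apply/eqP; lra.
  - have eC : (lab (e, false) \in C) = (lab (e, true) \in C) by rewrite (negbTE a) (negbTE c).
    by have := C_full eC (lab (e, false)); rewrite (negbTE a).
have := sum_mul_vp g v.
rewrite big1 => [|x _]; last by rewrite v_ker ffunE mulr0.
rewrite (bigD1 e) //= big1 ?addr0 => [|f fe]; last by rewrite g_edge // mulr0.
by move/esym/eqP; rewrite mulf_eq0 (negbTE g_e) orbF => /eqP.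
Qed.

End StaticEdges.

Lemma convex_comb_nonneg_eq0 (R : realDomainType) (t x y : R) :
  0 < t < 1 -> 0 <= x -> 0 <= y -> t * x + (1 - t) * y = 0 -> x = 0 /\ y = 0.
Proof.
move=> /andP [t0 t1] x0 y0 comb.
have tx0 : 0 <= t * x by rewrite mulr_ge0 // ltW.
have ty0 : 0 <= (1 - t) * y by rewrite mulr_ge0 // subr_ge0 ltW.
have tx : t * x = 0 by lra.
have ty : (1 - t) * y = 0 by lra.
by split; [move/eqP: tx | move/eqP: ty]; rewrite mulf_eq0 => /orP [] /eqP //; lra.
Qed.

Section Vertices.
Variables (E : finType) (n : nat) (lab : E * bool -> 'I_n) (R : realType).
Variables (b : {ffun 'I_n -> R}) (w : {ffun E -> R}).
Hypothesis w_vp : vp lab w = b.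

Lemma Fset_gt0 e : e \in Fset lab w -> 0 < w e.
Proof. by rewrite inE => /andP []. Qed.

Lemma notin_Fset_eq0 e :
  ~~ static_edge lab e -> e \notin Fset lab w -> 0 <= w e -> w e = 0.
Proof. by move=> es; rewrite inE es /= -leNgt => w_le0 w_ge0; apply/eqP; rewrite eq_le w_le0. Qed.

Lemma vp_step (v : {ffun E -> R}) t : vp lab v = 0 -> vp lab [ffun e => w e + t * v e] = b.
Proof. by move=> v_ker; apply/ffunP => x; rewrite vp_lincomb ffunE v_ker w_vp ffunE mulr0 addr0. Qed.

Lemma small_steps_nonneg (v : {ffun E -> R}) :
  exists2 eps : R, 0 < eps &
    forall e t, e \in Fset lab w -> `|t| <= eps -> 0 <= w e + t * v e.
Proof.
pose f e := w e / (`|v e| + 1).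
have den_gt0 e : 0 < `|v e| + 1 by have := normr_ge0 (v e); lra.
exists (\big[Order.min/1]_(e in Fset lab w) f e).
  by apply/bigmin_gtP; split=> // e /Fset_gt0 we; apply: divr_gt0.
move=> e t eF /le_trans/(_ (bigmin_le_cond _ f eF)) tf.
have : `|t * v e| <= w e.
  rewrite normrM (le_trans (ler_wpM2r (normr_ge0 _) tf)) // /f mulrAC ler_pdivrMr //.
  by have := Fset_gt0 eF; nra.
by rewrite ler_norml => /andP [low _]; lra.
Qed.

Lemma vertex_kernel_trivial :
  is_vertex (inP lab b) w -> kernel_trivial_on lab R (Fset lab w).
Proof.
move=> [[_ w_nn] ext] v v_ker v_supp.
have [eps eps_gt0 step] := small_steps_nonneg v.
have inP_step t : `|t| <= eps -> inP lab b [ffun e => w e + t * v e].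
  move=> te; split=> [|e es]; first exact: vp_step.
  rewrite ffunE; have [eF|eF] := boolP (e \in Fset lab w); first exact: step.
  by rewrite v_supp // mulr0 addr0; apply: w_nn.
have u12 : [ffun e => w e + eps * v e] = [ffun e => w e + (- eps) * v e].
  apply: (ext _ _ (1 / 2) (inP_step _ _) (inP_step _ _)).
  - by rewrite ger0_norm // ltW.
  - by rewrite normrN ger0_norm // ltW.
  - by apply/andP; split; lra.
  - by apply/ffunP => e; rewrite !ffunE; lra.
apply/ffunP => e; have /ffunP/(_ e) := u12; rewrite !ffunE => H.
have /eqP : eps * v e = 0 by lra.
by rewrite mulf_eq0 gt_eqF //= => /eqP.
Qed.

Lemma kernel_trivial_vertex :
  connected_graph lab -> ~~ bipartite_graph lab -> inP lab b w ->
  kernel_trivial_on lab R (Fset lab w) -> is_vertex (inP lab b) w.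
Proof.
move=> G_conn G_nonbip [_ w_nn] ktriv; split=> [|u1 u2 t]; first by split.
move=> [u1_vp u1_nn] [u2_vp u2_nn] t01 w_comb.
pose z := [ffun e => u1 e + (-1) * u2 e].
have z_ker : vp lab z = 0.
  by apply/ffunP => x; rewrite vp_lincomb ffunE u1_vp u2_vp ffunE; ring.
suff /ffunP z0 : z = 0 by apply/ffunP => e; have := z0 e; rewrite !ffunE; lra.
apply: (ktriv z) => // e eF.
have [se|nse] := boolP (static_edge lab e); first exact: (static_kernel_eq0 G_conn G_nonbip z_ker se).
have /ffunP/(_ e) := w_comb; rewrite ffunE (notin_Fset_eq0 nse eF (w_nn e nse)) => comb.
have [u1e u2e] := convex_comb_nonneg_eq0 t01 (u1_nn e nse) (u2_nn e nse) (esym comb).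
by rewrite ffunE u1e u2e mulr0 addr0.
Qed.

Lemma feasible_dirP (v : {ffun E -> R}) : inP lab b w ->
  feasible_dir (inP lab b) w v <->
  vp lab v = 0 /\ forall e, ~~ static_edge lab e -> e \notin Fset lab w -> 0 <= v e.
Proof.
move=> [_ w_nn]; split=> [[eps [eps_gt0 [step_vp step_nn]]] | [v_ker v_nn]].
  split=> [|e es eF].
    apply/ffunP => x; rewrite [RHS]ffunE.
    have /ffunP/(_ x) := step_vp; rewrite vp_lincomb ffunE w_vp => H.
    have /eqP : eps * vp lab v x = 0 by lra.
    by rewrite mulf_eq0 gt_eqF //= => /eqP.
  by have := step_nn e es; rewrite ffunE (notin_Fset_eq0 es eF (w_nn e es)) add0r pmulr_rge0.
have [eps eps_gt0 step] := small_steps_nonneg v.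
exists eps; split=> //; split=> [|e es]; first exact: vp_step.
rewrite ffunE; have [eF|eF] := boolP (e \in Fset lab w).
  by apply: (step _ _ eF); rewrite ger0_norm // ltW.
rewrite (notin_Fset_eq0 es eF (w_nn e es)) add0r.
by apply: mulr_ge0; [exact: ltW | exact: v_nn].
Qed.

End Vertices.

Theorem lemmaA5 (R : realType) (g n : nat) (kappa : seq nat) (E : finType)
    (s0 : {perm E * bool}) (lab : E * bool -> 'I_n) (b : {ffun 'I_n -> R}) :
  is_ribbon_graph g kappa s0 lab ->
  ~~ bipartite_graph lab ->
  forall w : {ffun E -> R}, vp lab w = b ->
  (is_vertex (inP lab b) w <->
     ((forall e, ~~ static_edge lab e -> 0 <= w e) /\
      trees_or_odd_unicyclic lab (Fset lab w))) /\
  (is_vertex (inP lab b) w ->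
     forall v : {ffun E -> R},
       feasible_dir (inP lab b) w v <->
       (vp lab v = 0 /\
        forall e, ~~ static_edge lab e -> e \notin Fset lab w -> 0 <= v e)).
Proof.
move=> [_ G_conn _ _ _] G_nonbip w w_vp.
split=> [|[w_in _] v]; last exact: feasible_dirP.
split=> [vert | [w_nn /kernel_trivial_onP ktriv]].
  split; first by case: vert => -[].
  by apply/kernel_trivial_onP; apply: vertex_kernel_trivial w_vp vert.
by apply: kernel_trivial_vertex => //; split.
Qed.
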